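(* Let $k$ be a field, $X=\mathbb P^{n_1}_k\times\cdots\times\mathbb P^{n_s}_k$ with $\mathbb Z^s$-graded coordinate ring $R=k[x_{i,j}: 1\le i\le s,\ 0\le j\le n_i]$ and irrelevant ideal $B=B_1\cdots B_s$, $B_i=(x_{i,0},\ldots,x_{i,n_i})$. Let $A=k[T_1,\ldots,T_r]$, $S=R[T_1,\ldots,T_r]$ graded by $\mathbb Z^s\times\mathbb Z$ (with $\deg T_i=(0,1)$), let $J\subseteq S$ be an ideal generated by finitely many homogeneous elements, $\mathcal S=S/J$, and let $\mathfrak A(J):=(J:B^\infty)\cap A$. For $\nu\in\mathbb Z^s$ write $\mathcal S_\nu=\bigoplus_{t}\mathcal S_{(\nu,t)}$, a finitely generated graded $A$-module. If $\nu\in\mathbb N^s$ satisfies $H^0_B(\mathcal S)_\nu=0$, then $\mathfrak A(J)=\mathrm{ann}_A(\mathcal S_\nu)$, and there exists an integer $n_\nu$ such that $$\mathfrak A(J)^{n_\nu}\subseteq \mathrm{Fitt}^0_A(\mathcal S_\nu)\subseteq\mathfrak A(J).$$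
   Context: $\mathrm{Fitt}^0_A(M)$ is the initial Fitting ideal of a finitely presented $A$-module $M$ (ideal of maximal minors of a presentation matrix). $\mathfrak A(J)$ defines the image $\pi_2(\Gamma)$ of the subscheme $\Gamma\subseteq X\times\mathbb P^{r-1}_k$ defined by $J$ under the second projection. *)

From HB Require Import structures.
From mathcomp Require Import all_boot all_order all_algebra.
From mathcomp Require Import mpoly.
Set Implicit Arguments. Unset Strict Implicit. Unset Printing Implicit Defensive.
Import Order.TTheory GRing.Theory.
Local Open Scope ring_scope.

Section Ideals.
Variable R : comRingType.

Definition ideal_span (G : R -> Prop) : R -> Prop :=
  fun f => exists l : seq (R * R),
    (forall p, p \in l -> G p.2) /\ f = \sum_(p <- l) p.1 * p.2.

Definition unit_ideal : R -> Prop := ideal_span (fun x => x = 1).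

Definition ideal_mul (I J : R -> Prop) : R -> Prop :=
  ideal_span (fun h => exists a b, I a /\ J b /\ h = a * b).

Definition ideal_pow (I : R -> Prop) (m : nat) : R -> Prop :=
  iter m (ideal_mul I) unit_ideal.

Definition saturation (J B : R -> Prop) : R -> Prop :=
  fun f => exists m, forall g, ideal_pow B m g -> J (f * g).
End Ideals.

(* Variables of S = R[T_1..T_r] are indexed by 'I_(nx + r):
   lshift r v (v : 'I_nx) is an x-variable lying in block blk v,
   rshift nx t (t : 'I_r) is the variable T_(t+1). *)
Section Setting.
Variables (k : fieldType) (s nx r : nat) (blk : 'I_nx -> 'I_s).

Definition Sring := {mpoly k[nx + r]}.
Definition Aring := {mpoly k[r]}.

Definition iotaA (a : Aring) : Sring :=
  mmap (fun c => c%:MP) (fun t => 'X_(rshift nx t)) a.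

Definition blockdeg (m : 'X_{1..nx + r}) (i : 'I_s) : nat :=
  (\sum_(v < nx | blk v == i) m (lshift r v))%N.
Definition Tdeg (m : 'X_{1..nx + r}) : nat :=
  (\sum_(t < r) m (rshift nx t))%N.

Definition homogeneous (f : Sring) : Prop :=
  exists (d : 'I_s -> nat) (e : nat), forall m, m \in msupp f ->
    (forall i, blockdeg m i = d i) /\ Tdeg m = e.

Definition in_deg (nu : 'I_s -> nat) (f : Sring) : Prop :=
  forall m, m \in msupp f -> forall i, blockdeg m i = nu i.

Definition Bi (i : 'I_s) : Sring -> Prop :=
  ideal_span (fun f : Sring => exists v, blk v = i /\ f = 'X_(lshift r v)).
Definition Birr : Sring -> Prop :=
  foldr (fun i I => ideal_mul (Bi i) I) (@unit_ideal _) (enum 'I_s).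

Definition frakA (J : Sring -> Prop) : Aring -> Prop :=
  fun a => saturation J Birr (iotaA a).

(* H^0_B(S/J)_nu = 0 : every element of (S/J)_nu killed by a power of B is 0 *)
Definition H0B_deg_zero (J : Sring -> Prop) (nu : 'I_s -> nat) : Prop :=
  forall f, in_deg nu f -> saturation J Birr f -> J f.

Definition annA (J : Sring -> Prop) (nu : 'I_s -> nat) : Aring -> Prop :=
  fun a => forall f, in_deg nu f -> J (iotaA a * f).

(* A finite presentation of the A-module (S/J)_nu:
   generators g : 'I_p -> S_nu (images mod J), relation matrix Phi whose
   q columns generate the kernel of A^p -> (S/J)_nu. *)
Definition presentation (J : Sring -> Prop) (nu : 'I_s -> nat)
    (p q : nat) (g : 'I_p -> Sring) (Phi : 'M[Aring]_(p, q)) : Prop :=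
  [/\ forall j, in_deg nu (g j),
      forall f, in_deg nu f ->
        exists a : 'I_p -> Aring, J (f - \sum_(j < p) iotaA (a j) * g j)
    & forall a : 'I_p -> Aring,
        J (\sum_(j < p) iotaA (a j) * g j) <->
        exists c : 'I_q -> Aring, forall j, a j = \sum_(l < q) Phi j l * c l].
End Setting.

(* Fitt^0 computed from a presentation matrix: ideal of maximal (p x p) minors *)
Definition Fitt0_of (R : comRingType) (p q : nat) (Phi : 'M[R]_(p, q)) : R -> Prop :=
  ideal_span (fun x => exists f : 'I_p -> 'I_q, injective f /\ x = \det (colsub f Phi)).

From HB Require Import structures.
From mathcomp Require Import all_boot all_order all_algebra.
From mathcomp Require Import mpoly.
From mathcomp Require Import ring.
Set Implicit Arguments. Unset Strict Implicit. Unset Printing Implicit Defensive.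
Import GRing.Theory.
Local Open Scope ring_scope.

(* We prove
     frakA(J) = ann_A(S_nu)   and   frakA(J)^p <= Fitt^0(S_nu) <= frakA(J),
   where p is the number of generators of the given presentation of S_nu.
   - Ideals are predicates; ideal_span G is the least ideal containing G.
   - Grading: the image of A lies in block degree 0, so A acts on S_nu; every
     element of B^m is supported on monomials of block degree >= m in each block.
   - frakA(J) <= ann: if a B^M <= J and f is in S_nu, then a f is a B-torsion
     element of degree nu, hence in J because H^0_B(S/J)_nu = 0.
     ann <= frakA(J): every monomial of B^(|nu|) is divisible by a monomial of
     block degree exactly nu, and those are killed by elements of ann.
   - Fitt^0 <= ann: by Cramer's rule (det M) e_j = M adj(M) e_j is a relation
     for every maximal minor M, so det M kills every generator g_j.
     ann^p <= Fitt^0: for a in ann, a times any row vector is a relation, i.e.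
     a combination of columns of Phi; expanding a_1 ... a_p det(1) row by row
     leaves determinants all of whose rows are columns of Phi: maximal minors
     of Phi, or zero when a column repeats. *)

Section Ideals.
Variable R : comRingType.
Implicit Types (G I : R -> Prop) (x y c : R).

Definition is_ideal I : Prop :=
  [/\ I 0, forall x y, I x -> I y -> I (x + y) & forall c x, I x -> I (c * x)].

Section IdealFacts.
Variables (I : R -> Prop) (idI : is_ideal I).

Lemma ideal0 : I 0. Proof. by case: idI. Qed.

Lemma idealD x y : I x -> I y -> I (x + y). Proof. by case: idI => _ + _; apply. Qed.

Lemma idealMl c x : I x -> I (c * x). Proof. by case: idI => _ _; apply. Qed.

Lemma idealMr c x : I x -> I (x * c). Proof. by rewrite mulrC; apply: idealMl. Qed.

Lemma ideal_sum (T : eqType) (l : seq T) (F : T -> R) :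
  (forall t, t \in l -> I (F t)) -> I (\sum_(t <- l) F t).
Proof.
elim: l => [|t l IH] Hl; first by rewrite big_nil; apply: ideal0.
rewrite big_cons; apply: idealD; first by apply/Hl/mem_head.
by apply: IH => u Hu; apply: Hl; rewrite inE Hu orbT.
Qed.

Lemma ideal_transporter y : is_ideal (fun b => I (b * y)).
Proof.
split; first by rewrite mul0r; apply: ideal0.
  by move=> a b Ha Hb; rewrite mulrDl; apply: idealD.
by move=> a b Hb; rewrite -mulrA; apply: idealMl.
Qed.
End IdealFacts.

Lemma ideal_span_ideal G : is_ideal (ideal_span G).
Proof.
split; first by exists [::]; rewrite big_nil.
  move=> x y [l1 [H1 ->]] [l2 [H2 ->]]; exists (l1 ++ l2); rewrite big_cat.
  by split=> // q; rewrite mem_cat => /orP [/H1|/H2].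
move=> c x [l [H ->]]; exists [seq (c * q.1, q.2) | q <- l]; split.
  by move=> q /mapP [q' /H Hq ->].
by rewrite big_map big_distrr; apply: eq_bigr => q _ /=; rewrite mulrA.
Qed.

Lemma ideal_span_gen G x : G x -> ideal_span G x.
Proof.
move=> Gx; exists [:: (1, x)]; rewrite big_seq1 mul1r.
by split=> // q /[!inE] /eqP ->.
Qed.

Lemma ideal_span_min G I : is_ideal I -> (forall x, G x -> I x) ->
  forall x, ideal_span G x -> I x.
Proof.
move=> idI GI x [l [Hl ->]]; apply: ideal_sum => // q /Hl Gq.
exact: idealMl idI _ _ (GI _ Gq).
Qed.

Lemma ideal_pow_mono I (I' : R -> Prop) : (forall x, I x -> I' x) ->
  forall m x, ideal_pow I m x -> ideal_pow I' m x.
Proof.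
move=> II' m; elim: m => [//|m IH] x /=.
apply: ideal_span_min; first exact: ideal_span_ideal.
by move=> _ [a [b [Ia [Jb ->]]]]; apply: ideal_span_gen; exists a, b; auto.
Qed.
End Ideals.

Section Grading.
Variables (k : fieldType) (s nx r : nat) (blk : 'I_nx -> 'I_s).
Local Notation S := (Sring k nx r).
Local Notation A := (Aring k r).
Local Notation bd := (@blockdeg s nx r blk).
Local Notation ind := (@in_deg k s nx r blk).
Local Notation deg0 := (ind (fun _ => 0%N)).
Local Notation ioA := (@iotaA k nx r).

HB.instance Definition _ := GRing.RMorphism.copy ioA
  (mmap (@mpolyC (nx + r) k) (fun t => 'X_(rshift nx t))).

Lemma blockdeg0 i : bd 0%MM i = 0%N.
Proof. by rewrite /blockdeg big1 // => v _; rewrite mnm0E. Qed.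

Lemma blockdegD m1 m2 i : bd (m1 + m2)%MM i = (bd m1 i + bd m2 i)%N.
Proof. by rewrite /blockdeg -big_split /=; apply: eq_bigr => v _; rewrite mnmDE. Qed.

Lemma blockdegU v i : bd U_(lshift r v)%MM i = (blk v == i).
Proof.
rewrite /blockdeg; have [<-|ne] := eqVneq.
  rewrite (bigD1 v) //= mnm1E eqxx big1 // => w /andP [_ wv].
  by rewrite mnm1E; case: eqP => // /lshift_inj eq_wv; rewrite eq_wv eqxx in wv.
rewrite big1 // => w /eqP bw; rewrite mnm1E; case: eqP => // /lshift_inj eq_wv.
by rewrite -bw eq_wv eqxx in ne.
Qed.

Lemma in_deg0 d : ind d 0.
Proof. by move=> m; rewrite msupp0. Qed.

Lemma in_degD d f g : ind d f -> ind d g -> ind d (f + g).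
Proof. by move=> Hf Hg m /msuppD_le; rewrite mem_cat => /orP [/Hf|/Hg]. Qed.

Lemma in_deg_sum d (T : eqType) (l : seq T) (F : T -> S) :
  (forall t, ind d (F t)) -> ind d (\sum_(t <- l) F t).
Proof.
move=> H; elim: l => [|t l IH]; first by rewrite big_nil; apply: in_deg0.
by rewrite big_cons; apply: in_degD.
Qed.

Lemma in_deg_mul0 d f g : deg0 f -> ind d g -> ind d (f * g).
Proof.
move=> Hf Hg m /msuppM_le /allpairsP [[m1 m2] [/= H1 H2 ->]] i.
by rewrite blockdegD Hf // Hg.
Qed.

Lemma in_degC c : deg0 c%:MP.
Proof. by move=> m; rewrite msuppC; case: eqP => // _ /[!inE] /eqP -> i; apply: blockdeg0. Qed.

Lemma in_deg_prod (T : eqType) (l : seq T) (F : T -> S) :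
  (forall t, deg0 (F t)) -> deg0 (\prod_(t <- l) F t).
Proof.
move=> H; elim: l => [|t l IH]; first by rewrite big_nil -mpolyC1; apply: in_degC.
by rewrite big_cons; apply: in_deg_mul0.
Qed.

Lemma in_degX f n : deg0 f -> deg0 (f ^+ n).
Proof. by move=> H; rewrite -[n]subn0 -prodr_const_nat; apply: in_deg_prod. Qed.

Lemma in_degT t : deg0 ('X_(rshift nx t) : S).
Proof.
move=> m /[!msuppX] /[!inE] /eqP -> i; rewrite /blockdeg big1 // => v _.
rewrite mnm1E; case: eqP => // /(congr1 val) /= E.
by move: (ltn_ord v); rewrite -E ltnNge leq_addr.
Qed.

Lemma iotaA_deg0 (a : A) : deg0 (ioA a).
Proof.
apply: in_deg_sum => m; apply: in_deg_mul0; first exact: in_degC.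
by apply: in_deg_prod => t; apply/in_degX/in_degT.
Qed.

Lemma in_deg_iotaAM d (a : A) f : ind d f -> ind d (ioA a * f).
Proof. exact/in_deg_mul0/iotaA_deg0. Qed.

Definition deg_atleast (d : 'I_s -> nat) (f : S) : Prop :=
  forall m, m \in msupp f -> forall i, (d i <= bd m i)%N.

Lemma deg_atleast_ideal d : is_ideal (deg_atleast d).
Proof.
split; first by move=> m; rewrite msupp0.
  by move=> f g Hf Hg m /msuppD_le; rewrite mem_cat => /orP [/Hf|/Hg].
move=> c f Hf m /msuppM_le /allpairsP [[m1 m2] [/= _ H2 ->]] i.
by rewrite blockdegD (leq_trans (Hf _ H2 i)) ?leq_addl.
Qed.

Lemma deg_atleastM d e f g : deg_atleast d f -> deg_atleast e g ->
  deg_atleast (fun i => d i + e i)%N (f * g).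
Proof.
move=> Hf Hg m /msuppM_le /allpairsP [[m1 m2] [/= H1 H2 ->]] i.
by rewrite blockdegD leq_add ?Hf ?Hg.
Qed.

Lemma deg_atleast_weaken d e f : (forall i, d i <= e i)%N ->
  deg_atleast e f -> deg_atleast d f.
Proof. by move=> de H m Hm i; apply: leq_trans (de i) (H m Hm i). Qed.

Lemma Bprod_deg (l : seq 'I_s) f :
  foldr (fun i I => ideal_mul (Bi blk i) I) (@unit_ideal _) l f ->
  deg_atleast (fun j => count_mem j l) f.
Proof.
elim: l f => [|i l IH] f /=; first by move=> _ m _ j.
apply: ideal_span_min; first exact: deg_atleast_ideal.
move=> _ [a [b [Ha [Hb ->]]]]; apply: (deg_atleastM (d := fun j => nat_of_bool (i == j))) (IH _ Hb).
move: a Ha; apply: ideal_span_min; first exact: deg_atleast_ideal.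
by move=> _ [v [<- ->]] m /[!msuppX] /[!inE] /eqP -> j; rewrite blockdegU.
Qed.

Lemma Bpow_deg m f : ideal_pow (Birr blk) m f -> deg_atleast (fun _ => m) f.
Proof.
elim: m f => [|m IH] f /=; first by move=> _ x _ j.
apply: ideal_span_min; first exact: deg_atleast_ideal.
move=> _ [a [b [Ha [Hb ->]]]]; apply: (deg_atleastM (d := fun _ => 1%N)) (IH _ Hb).
apply: deg_atleast_weaken (Bprod_deg Ha) => j.
by rewrite count_uniq_mem ?enum_uniq // mem_enum.
Qed.

(* A monomial of block degree >= d is divisible by one of block degree d.
   Induction on |d|: remove one variable x_v from a block i with d i > 0. *)
Lemma monomial_split n (d : 'I_s -> nat) (m : 'X_{1..nx + r}) :
  (\sum_i d i)%N = n -> (forall i, d i <= bd m i)%N ->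
  exists b c, m = (b + c)%MM /\ forall i, bd b i = d i.
Proof.
elim: n d m => [|n IH] d m Hs Hd.
  exists 0%MM, m; split=> [|i]; first by rewrite add0m.
  move/eqP: Hs; rewrite sum_nat_eq0 => /forallP /(_ i) /implyP /(_ isT) /eqP ->.
  exact: blockdeg0.
have [i Hi] : exists i, (0 < d i)%N.
  apply/existsP; apply: contraPT Hs => /existsPn d0.
  by rewrite big1 // => i _; apply/eqP; rewrite -leqn0 leqNgt d0.
have [v /andP [/eqP bv mv]] : exists v, (blk v == i) && (0 < m (lshift r v))%N.
  apply/existsP/contraT => /existsPn m0.
  suff bd0 : bd m i = 0%N by move: (Hd i); rewrite bd0 leqn0 => /eqP di0; rewrite di0 ltnn in Hi.
  rewrite /blockdeg big1 // => v /eqP bv.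
  by apply/eqP; rewrite -leqn0 leqNgt; move: (m0 v); rewrite bv eqxx.
pose u := U_(lshift r v)%MM.
have Hm : m = ((m - u) + u)%MM.
  rewrite submK //; apply/mnm_lepP => w; rewrite mnm1E.
  by case: eqP => [<-|]; rewrite ?mv.
pose d' j := (d j - (i == j))%N.
have Hdd j : d j = (d' j + (i == j))%N.
  by rewrite /d'; case: eqP => [<-|_]; rewrite ?subn0 ?addn0 ?subnK.
have Hs' : (\sum_j d' j)%N = n.
  move: Hs; rewrite (eq_bigr _ (fun j _ => Hdd j)) big_split /=.
  have -> : (\sum_j nat_of_bool (i == j))%N = 1%N.
    by rewrite (bigD1 i) //= eqxx big1 // => j; rewrite eq_sym => /negbTE ->.
  by rewrite addn1 => -[].
have Hd' j : (d' j <= bd (m - u)%MM j)%N.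
  move: (Hd j); rewrite {1}Hm blockdegD blockdegU bv Hdd.
  by case: (i == j); rewrite ?addn0 ?addn1 ?ltnS.
have [b [c [Hbc Hb]]] := IH d' (m - u)%MM Hs' Hd'.
exists (b + u)%MM, c; split=> [|j]; last by rewrite blockdegD blockdegU bv Hb Hdd.
by rewrite Hm Hbc -addmA [(c + u)%MM]addmC addmA.
Qed.
End Grading.

Section Annihilator.
Variables (k : fieldType) (s nx r : nat) (blk : 'I_nx -> 'I_s).
Local Notation S := (Sring k nx r).
Local Notation ioA := (@iotaA k nx r).
Variables (J : S -> Prop) (idJ : is_ideal J) (nu : 'I_s -> nat).

Lemma frakA_sub_annA : H0B_deg_zero blk J nu ->
  forall a, frakA blk J a -> annA blk J nu a.
Proof.
move=> H0B a [M HM] f Hf; apply: H0B; first exact: in_deg_iotaAM.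
exists M => g Hg; rewrite -mulrA [f * g]mulrC mulrA.
exact: idealMr (HM g Hg).
Qed.

(* ann_A(S_nu) <= frakA(J): an annihilator kills B^(|nu|). *)
Lemma annA_sub_frakA a : annA blk J nu a -> frakA blk J a.
Proof.
move=> Ha; exists (\sum_i nu i)%N => g /Bpow_deg Hg.
have {}Hg : deg_atleast blk nu g.
  by apply: deg_atleast_weaken Hg => i; rewrite (bigD1 i) //= leq_addr.
rewrite [g]mpolyE big_distrr /=; apply: ideal_sum => // m Hm.
have [b [c [-> Hb]]] := monomial_split (erefl _) (Hg m Hm).
have -> : ioA a * (g@_(b + c)%MM *: 'X_[b + c]) =
          (g@_(b + c)%MM *: 'X_[c]) * (ioA a * 'X_[b]).
  by rewrite mpolyXD -!mul_mpolyC; ring.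
apply: idealMl => //; apply: Ha => m'.
by rewrite msuppX inE => /eqP -> i; rewrite Hb.
Qed.
End Annihilator.

Section RowReplacement.
Variables (R : comRingType) (p : nat).

Definition row_replace (M : 'M[R]_p) (i0 : 'I_p) (v : 'I_p -> R) : 'M[R]_p :=
  \matrix_(i, j) if i == i0 then v j else M i j.

Lemma row_replace_ext M i0 v w : v =1 w -> row_replace M i0 v = row_replace M i0 w.
Proof. by move=> vw; apply/matrixP => i j; rewrite !mxE vw. Qed.

Lemma det_row_replaceD M i0 b v c w :
  \det (row_replace M i0 (fun j => b * v j + c * w j)) =
  b * \det (row_replace M i0 v) + c * \det (row_replace M i0 w).
Proof.
apply: (determinant_multilinear (i0 := i0)).
- by apply/rowP => j; rewrite !mxE eqxx.
- by apply/matrixP => i j; rewrite !mxE eq_sym (negbTE (neq_lift i0 i)).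
- by apply/matrixP => i j; rewrite !mxE eq_sym (negbTE (neq_lift i0 i)).
Qed.

Lemma row_replace_id M i0 : row_replace M i0 (fun j => M i0 j) = M.
Proof. by apply/matrixP => i j; rewrite mxE; case: eqP => [->|]. Qed.

Lemma det_row_replace_sum (I : Type) (l : seq I) (c : I -> R) (V : I -> 'I_p -> R)
    (M : 'M[R]_p) i0 :
  \det (row_replace M i0 (fun j => \sum_(t <- l) c t * V t j)) =
  \sum_(t <- l) c t * \det (row_replace M i0 (V t)).
Proof.
elim: l => [|t l IH].
  rewrite big_nil (@row_replace_ext _ _ _ (fun j => 0 * 0 + 0 * 0)).
    by rewrite det_row_replaceD !mul0r addr0.
  by move=> j; rewrite big_nil mul0r addr0.
rewrite big_cons (@row_replace_ext _ _ _
  (fun j => c t * V t j + 1 * \sum_(t <- l) c t * V t j)); last first.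
  by move=> j; rewrite big_cons mul1r.
by rewrite det_row_replaceD IH mul1r.
Qed.

Lemma det_row_expand (I : Type) (l : seq I) (c : I -> R) (V : I -> 'I_p -> R)
    (M : 'M[R]_p) i0 a : (forall j, a * M i0 j = \sum_(t <- l) c t * V t j) ->
  a * \det M = \sum_(t <- l) c t * \det (row_replace M i0 (V t)).
Proof.
move=> HM; transitivity (\det (row_replace M i0 (fun j => a * M i0 j + 0 * M i0 j))).
  by rewrite det_row_replaceD row_replace_id mul0r addr0.
rewrite -det_row_replace_sum; congr (\det _); apply: row_replace_ext => j.
by rewrite mul0r addr0 HM.
Qed.
End RowReplacement.

Section Fitting.
Variables (k : fieldType) (s nx r : nat) (blk : 'I_nx -> 'I_s).
Local Notation S := (Sring k nx r).
Local Notation A := (Aring k r).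
Local Notation ioA := (@iotaA k nx r).
Variables (J : S -> Prop) (idJ : is_ideal J) (nu : 'I_s -> nat).
Variables (p q : nat) (g : 'I_p -> S) (Phi : 'M[A]_(p, q)).
Hypothesis pres : presentation blk J nu g Phi.
Local Notation ann := (annA blk J nu).
Local Notation Fitt := (Fitt0_of Phi).

Lemma annA_ideal : is_ideal ann.
Proof.
split; first by move=> f _; rewrite rmorph0 mul0r; apply: ideal0.
  by move=> x y Hx Hy f Hf; rewrite rmorphD mulrDl; exact: idealD idJ _ _ (Hx f Hf) (Hy f Hf).
by move=> c x Hx f Hf; rewrite rmorphM -mulrA; exact: idealMl idJ _ _ (Hx f Hf).
Qed.

Lemma annA_of_gens x : (forall j, J (ioA x * g j)) -> ann x.
Proof.
case: pres => _ gen _ xg f /gen [b Hb].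
rewrite -(subrK (\sum_j ioA (b j) * g j) f) mulrDr big_distrr /=.
apply: idealD => //; first exact: idealMl.
by apply: ideal_sum => // j _; rewrite mulrCA; apply: idealMl.
Qed.

(* Fitt^0 <= ann: by Cramer's rule (det M) e_j = M adj(M) e_j is a relation. *)
Lemma Fitt_sub_annA x : Fitt x -> ann x.
Proof.
case: pres => _ _ rel; apply: ideal_span_min; first exact: annA_ideal.
move=> _ [f [_ ->]]; set M := colsub f Phi; apply: annA_of_gens => j.
have -> : ioA (\det M) * g j = \sum_l ioA (\det M *+ (l == j)) * g l.
  rewrite (bigD1 j) //= eqxx mulr1n big1 ?addr0 // => l /negbTE ->.
  by rewrite mulr0n rmorph0 mul0r.
apply/(rel (fun l => \det M *+ (l == j))).
exists (fun l' => \sum_(i < p | f i == l') \adj M i j) => l.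
have := congr1 (fun N : 'M[A]_p => N l j) (mul_mx_adj M); rewrite !mxE /= => <-.
rewrite (partition_big f predT) //=; apply: eq_bigr => l' _.
by rewrite big_distrr /=; apply: eq_bigr => i /eqP <-; rewrite mxE.
Qed.

Lemma annA_relation a (w : 'I_p -> A) : ann a ->
  exists c : 'I_q -> A, forall j, a * w j = \sum_l Phi j l * c l.
Proof.
case: pres => deg_g _ rel Ha; apply/rel.
have -> : \sum_j ioA (a * w j) * g j = ioA a * \sum_j ioA (w j) * g j.
  by rewrite big_distrr; apply: eq_bigr => j _; rewrite rmorphM -mulrA.
apply: Ha; apply: in_deg_sum => j; exact/in_deg_iotaAM/deg_g.
Qed.

(* A square matrix all of whose rows are columns of Phi has its determinant
   in Fitt^0: it is a maximal minor, or zero if a column repeats. *)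
Lemma det_columns_Fitt (M : 'M[A]_p) (f : 'I_p -> 'I_q) :
  (forall j i, M j i = Phi i (f j)) -> Fitt (\det M).
Proof.
move=> HM; have -> : M = (colsub f Phi)^T by apply/matrixP => j i; rewrite !mxE HM.
have [/injectiveP inj_f|/injectivePn [j1 [j2 ne12 E]]] := boolP (injectiveb f).
  by rewrite det_tr; apply: ideal_span_gen; exists f.
rewrite (determinant_alternate ne12) => [|i]; last by rewrite !mxE E.
exact: ideal0 (ideal_span_ideal _).
Qed.

(* Main step: if b is in ann^m and the rows of M beyond m are columns of Phi,
   then b det M is in Fitt^0.  Induction on m: for b = a b' with a in ann,
   expand a det M along the relation a (row m of M). *)
Lemma annA_pow_det m : (m <= p)%N -> forall b (M : 'M[A]_p),
  ideal_pow ann m b ->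
  (forall j : 'I_p, (m <= j)%N -> exists l : 'I_q, forall i, M j i = Phi i l) ->
  Fitt (b * \det M).
Proof.
have idF : is_ideal Fitt by apply: ideal_span_ideal.
elim: m => [|m IH] le_mp b M Hb HM.
  have [f Hf] := fin_all_exists (fun j => HM j (leq0n _)).
  by apply: idealMl => //; apply: (det_columns_Fitt (f := f)).
pose jm := Ordinal le_mp.
move: b Hb; apply: (ideal_span_min (ideal_transporter idF (\det M))).
move=> _ [a [b' [Ha [Hb' ->]]]].
have [c Hc] := annA_relation (fun i => M jm i) Ha.
have expand := det_row_expand (V := fun l i => Phi i l) (i0 := jm)
  (fun i => etrans (Hc i) (eq_bigr _ (fun l _ => mulrC _ _))).
rewrite -mulrA mulrCA expand mulr_sumr; apply: ideal_sum => // l _.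
rewrite mulrCA; apply: idealMl => //; apply: IH; [exact: ltnW | exact: Hb' |].
move=> j le_mj; have [->|ne] := eqVneq j jm; first by exists l => i; rewrite mxE eqxx.
have [l' Hl'] : exists l : 'I_q, forall i, M j i = Phi i l.
  apply: HM; rewrite ltn_neqAle le_mj andbT.
  by apply: contra ne => /eqP E; apply/eqP/val_inj.
by exists l' => i; rewrite mxE (negbTE ne).
Qed.

(* ann^p <= Fitt^0: take M = 1 and m = p. *)
Lemma annA_pow_sub_Fitt b : ideal_pow ann p b -> Fitt b.
Proof.
move=> Hb; rewrite -[b]mulr1 -(det1 _ p).
apply: annA_pow_det (leqnn _) _ _ Hb _ => j.
by rewrite leqNgt ltn_ord.
Qed.
End Fitting.

Theorem mainTheorem3 (k : fieldType) (s nx r : nat) (blk : 'I_nx -> 'I_s)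
  (blk_nonempty : forall i : 'I_s, exists v, blk v = i)
  (gens : seq (Sring k nx r))
  (gens_hom : forall f, f \in gens -> homogeneous blk f)
  (nu : 'I_s -> nat) :
  let J := ideal_span (fun f => f \in gens) in
  H0B_deg_zero blk J nu ->
  (forall a, frakA blk J a <-> annA blk J nu a) /\
  (forall (p q : nat) (g : 'I_p -> Sring k nx r) (Phi : 'M[Aring k r]_(p, q)),
     presentation blk J nu g Phi ->
     exists n : nat,
       (forall a, ideal_pow (frakA blk J) n a -> Fitt0_of Phi a) /\
       (forall a, Fitt0_of Phi a -> frakA blk J a)).
Proof.
move=> J H0B; have idJ : is_ideal J by apply: ideal_span_ideal.
have frakA_annA := frakA_sub_annA idJ H0B.
have annA_frakA := annA_sub_frakA (blk := blk) idJ (nu := nu).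
split=> [a|p q g Phi pres]; first by split; [apply: frakA_annA | apply: annA_frakA].
exists p; split=> a Ha.
  by apply: (annA_pow_sub_Fitt pres); apply: ideal_pow_mono Ha.
by apply: annA_frakA; apply: (Fitt_sub_annA idJ pres).
Qed.
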